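(* Let $f:\mathbb{R}\to(0,\infty)$ be a smooth function with positive lower and upper bounds, and let $g_f=-f^2(x)\,dt^2+dx^2$ on $\mathbb{R}^2$ with coordinates $(t,x)$, time-oriented by $\partial/\partial t$. If $p=(t_0,x_0)$ and $f(x_0)=\sup_{x\in\mathbb{R}}f(x)$, then $p$ is a timelike pole of $(\mathbb{R}^2,g_f)$.
   Context: A point $p$ of a Lorentzian manifold is a timelike pole if no timelike geodesic starting at $p$ contains a pair of conjugate points. *)

From Stdlib Require Import Reals Lra.
Open Scope R_scope.

(* Coordinate index 0 = t, 1 = x.  A smooth f is given together with
   the family of all its derivatives: fd 0 = f, fd (n+1) = (fd n)'. *)

Definition smooth_family (fd : nat -> R -> R) : Prop :=
  forall (n : nat) (x : R), derivable_pt_lim (fd n) x (fd (S n) x).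

Definition sum2 (F : nat -> R) : R := F 0%nat + F 1%nat.

Definition gmet (fd : nat -> R -> R) (x : R) (i j : nat) : R :=
  match i, j with
  | 0%nat, 0%nat => - (fd 0%nat x) ^ 2
  | 1%nat, 1%nat => 1
  | _, _ => 0
  end.

(* Christoffel symbols Gamma^k_{ij} of the Levi-Civita connection of g_f
   (they depend only on x):  Gamma^t_{tx} = Gamma^t_{xt} = f'/f,
   Gamma^x_{tt} = f f', all others 0. *)
Definition Chr (fd : nat -> R -> R) (k i j : nat) (x : R) : R :=
  match k, i, j with
  | 0%nat, 0%nat, 1%nat | 0%nat, 1%nat, 0%nat => fd 1%nat x / fd 0%nat x
  | 1%nat, 0%nat, 0%nat => fd 0%nat x * fd 1%nat x
  | _, _, _ => 0
  end.

(* partial derivative d_l Gamma^k_{ij}  (d_t = 0, d_x computed) *)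
Definition dChr (fd : nat -> R -> R) (l k i j : nat) (x : R) : R :=
  match l with
  | 1%nat =>
    match k, i, j with
    | 0%nat, 0%nat, 1%nat | 0%nat, 1%nat, 0%nat =>
        (fd 2%nat x * fd 0%nat x - fd 1%nat x ^ 2) / (fd 0%nat x) ^ 2
    | 1%nat, 0%nat, 0%nat => fd 1%nat x ^ 2 + fd 0%nat x * fd 2%nat x
    | _, _, _ => 0
    end
  | _ => 0
  end.

(* Riemann tensor R^k_{lij}, with R(d_i,d_j) d_l = R^k_{lij} d_k and
   R(X,Y) = [nabla_X, nabla_Y] - nabla_[X,Y]. *)
Definition Riem (fd : nat -> R -> R) (k l i j : nat) (x : R) : R :=
  dChr fd i k j l x - dChr fd j k i l x
  + sum2 (fun m => Chr fd k i m x * Chr fd m j l x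
                   - Chr fd k j m x * Chr fd m i l x).

(* c k s = k-th coordinate of the curve at parameter s; v, a = its first and
   second derivatives.  Geodesic on the parameter interval [0,T]. *)
Definition geodesic (fd : nat -> R -> R) (T : R) (c v a : nat -> R -> R) : Prop :=
  forall s, 0 <= s <= T -> forall k : nat, (k < 2)%nat ->
    derivable_pt_lim (c k) s (v k s) /\
    derivable_pt_lim (v k) s (a k s) /\
    a k s + sum2 (fun i => sum2 (fun j => Chr fd k i j (c 1%nat s) * v i s * v j s)) = 0.

Definition timelike (fd : nat -> R -> R) (T : R) (c v : nat -> R -> R) : Prop :=
  forall s, 0 <= s <= T ->
    sum2 (fun i => sum2 (fun j => gmet fd (c 1%nat s) i j * v i s * v j s)) < 0.

(* J is a Jacobi field along the curve (c,v) on [a,b]: J1 = dJ/ds,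
   W = D J/ds (covariant derivative), W1 = dW/ds, and
   D^2 J/ds^2 + R(J, c') c' = 0. *)
Definition jacobi (fd : nat -> R -> R) (a b : R) (c v J J1 W W1 : nat -> R -> R) : Prop :=
  forall s, a <= s <= b -> forall k : nat, (k < 2)%nat ->
    derivable_pt_lim (J k) s (J1 k s) /\
    W k s = J1 k s + sum2 (fun i => sum2 (fun j => Chr fd k i j (c 1%nat s) * v i s * J j s)) /\
    derivable_pt_lim (W k) s (W1 k s) /\
    W1 k s + sum2 (fun i => sum2 (fun j => Chr fd k i j (c 1%nat s) * v i s * W j s))
    + sum2 (fun l => sum2 (fun i => sum2 (fun j =>
         Riem fd k l i j (c 1%nat s) * J i s * v j s * v l s))) = 0.

Definition conjugate (fd : nat -> R -> R) (c v : nat -> R -> R) (a b : R) : Prop :=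
  a < b /\
  exists J J1 W W1 : nat -> R -> R,
    jacobi fd a b c v J J1 W W1 /\
    J 0%nat a = 0 /\ J 1%nat a = 0 /\ J 0%nat b = 0 /\ J 1%nat b = 0 /\
    exists s, a <= s <= b /\ (J 0%nat s <> 0 \/ J 1%nat s <> 0).

Definition timelike_pole (fd : nat -> R -> R) (t0 x0 : R) : Prop :=
  forall (T : R) (c v acc : nat -> R -> R),
    geodesic fd T c v acc -> timelike fd T c v ->
    c 0%nat 0 = t0 -> c 1%nat 0 = x0 ->
    ~ (exists a b, 0 <= a /\ b <= T /\ conjugate fd c v a b).

From Stdlib Require Import Reals Lra Psatz.
Open Scope R_scope.

(* Two Jacobi fields along a geodesic have constant Wronskian.  Since c' and the
   Killing field d/dt are Jacobi fields, g(J, c') is affine in s and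
   w = g(DJ/ds, d/dt) - g(J, D(d/dt)/ds) is constant.  A Jacobi field vanishing
   at s = a and s = b therefore satisfies g(J, c') = 0 on [a, b], and then
   (J^t / x'^2)' = - w / (f x')^2, which forces J = 0 as long as x' never vanishes.
   As f(x0) is the maximum of f, the conserved quantities f^2 t' and g(c', c')
   show that x' can only vanish along a geodesic from p if x'(0) = 0.  In that
   case f'(x0) = 0 and a Gronwall estimate keep the geodesic on the line x = x0,
   where the Jacobi equation decouples into (J^t)'' = 0 and
   (J^x)'' = - f f''(x0) t'^2 J^x with - f f''(x0) >= 0, so again J = 0. *)

Lemma derivable_pt_lim_eq f x l l' :
  derivable_pt_lim f x l -> l = l' -> derivable_pt_lim f x l'.
Proof. now intros H <-. Qed.

(* The primed rules are stated on explicit [fun y => ...] terms, so that [eapply]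
   can match them against expressions (used by [derive_rules] below). *)
Lemma derivable_pt_lim_plus' u w x du dw :
  derivable_pt_lim u x du -> derivable_pt_lim w x dw ->
  derivable_pt_lim (fun y => u y + w y) x (du + dw).
Proof. exact (derivable_pt_lim_plus u w x du dw). Qed.

Lemma derivable_pt_lim_minus' u w x du dw :
  derivable_pt_lim u x du -> derivable_pt_lim w x dw ->
  derivable_pt_lim (fun y => u y - w y) x (du - dw).
Proof. exact (derivable_pt_lim_minus u w x du dw). Qed.

Lemma derivable_pt_lim_mult' u w x du dw :
  derivable_pt_lim u x du -> derivable_pt_lim w x dw ->
  derivable_pt_lim (fun y => u y * w y) x (du * w x + u x * dw).
Proof. exact (derivable_pt_lim_mult u w x du dw). Qed.

Lemma derivable_pt_lim_opp' u x du :
  derivable_pt_lim u x du -> derivable_pt_lim (fun y => - u y) x (- du).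
Proof. exact (derivable_pt_lim_opp u x du). Qed.

Lemma derivable_pt_lim_div' u w x du dw :
  derivable_pt_lim u x du -> derivable_pt_lim w x dw -> w x <> 0 ->
  derivable_pt_lim (fun y => u y / w y) x ((du * w x - dw * u x) / Rsqr (w x)).
Proof. exact (derivable_pt_lim_div u w x du dw). Qed.

Lemma derivable_pt_lim_comp' (g u : R -> R) x du dg :
  derivable_pt_lim u x du -> derivable_pt_lim g (u x) dg ->
  derivable_pt_lim (fun y => g (u y)) x (dg * du).
Proof. exact (derivable_pt_lim_comp u g x du dg). Qed.

Lemma derivable_pt_lim_Rmult a x : derivable_pt_lim (Rmult a) x a.
Proof.
  apply (derivable_pt_lim_eq _ _ (0 * x + a * 1));
    [exact (derivable_pt_lim_mult _ _ x 0 1 (derivable_pt_lim_const a x)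
                                    (derivable_pt_lim_id x))|ring].
Qed.

Ltac derive_rules := first
  [ apply derivable_pt_lim_const | apply derivable_pt_lim_id | apply derivable_pt_lim_Rmult
  | eapply derivable_pt_lim_plus'; derive_rules
  | eapply derivable_pt_lim_minus'; derive_rules
  | eapply derivable_pt_lim_mult'; derive_rules
  | eapply derivable_pt_lim_opp'; derive_rules
  | eapply derivable_pt_lim_div'; [derive_rules | derive_rules | ]
  | eapply derivable_pt_lim_comp'; [derive_rules | first [apply derivable_pt_lim_exp | solve [eauto]]]
  | eassumption ].

Lemma const_of_derive_0 g a b :
  (forall s, a <= s <= b -> derivable_pt_lim g s 0) ->
  forall s, a <= s <= b -> g s = g a.
Proof.
  intros Hg s Hs. destruct (Req_dec s a) as [->|Hne]; [reflexivity|].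
  destruct (MVT_cor2 g (fun _ => 0) a s) as (xi & E & _); [lra| |lra].
  intros y Hy. apply Hg. lra.
Qed.

Lemma incr_of_derive_ge0 g g' a b :
  (forall s, a <= s <= b -> derivable_pt_lim g s (g' s)) ->
  (forall s, a <= s <= b -> 0 <= g' s) ->
  forall s t, a <= s -> s <= t -> t <= b -> g s <= g t.
Proof.
  intros Hg Hg' s t Has Hst Htb. destruct (Req_dec s t) as [->|Hne]; [lra|].
  destruct (MVT_cor2 g g' s t) as (xi & E & Hxi); [lra| |].
  - intros y Hy. apply Hg. lra.
  - assert (0 <= g' xi) by (apply Hg'; lra). nra.
Qed.

Lemma bounded_of_derivable g a b :
  (forall s, a <= s <= b -> exists l, derivable_pt_lim g s l) ->
  exists B, forall s, a <= s <= b -> Rabs (g s) <= B.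
Proof.
  intros Hg. destruct (Rle_lt_dec a b) as [Hab|Hba]; [|exists 0; intros; lra].
  assert (Hc : forall s, a <= s <= b -> continuity_pt g s).
  { intros s Hs. destruct (Hg s Hs) as [l Hl].
    apply derivable_continuous_pt. now exists l. }
  destruct (continuity_ab_maj g a b Hab Hc) as (xM & HM & _).
  destruct (continuity_ab_min g a b Hab Hc) as (xm & Hm & _).
  exists (Rabs (g xM) + Rabs (g xm)). intros s Hs.
  specialize (HM s Hs). specialize (Hm s Hs).
  unfold Rabs in *. repeat destruct Rcase_abs; lra.
Qed.

Lemma vanish_of_derive_const_mul h k q a b : a < b -> h a = 0 -> h b = 0 ->
  (forall s, a <= s <= b -> derivable_pt_lim h s (k s * q s)) ->
  (forall s, a <= s <= b -> derivable_pt_lim k s 0) ->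
  (forall s, a <= s <= b -> q s <> 0) ->
  forall s, a <= s <= b -> h s = 0.
Proof.
  intros Hab ha hb Hh Hk Hq.
  destruct (MVT_cor2 h (fun s => k s * q s) a b Hab Hh) as (xi & E & Hxi).
  assert (Hkxi : k xi = 0).
  { rewrite ha, hb in E.
    assert (Hkq : k xi * q xi = 0) by nra.
    destruct (Rmult_integral _ _ Hkq) as [|Hq0]; [assumption|].
    exfalso; apply (Hq xi); [lra|exact Hq0]. }
  assert (Hk0 : forall s, a <= s <= b -> k s = 0).
  { intros s Hs. rewrite (const_of_derive_0 k a b Hk s Hs).
    rewrite <- (const_of_derive_0 k a b Hk xi); [exact Hkxi|lra]. }
  intros s Hs. rewrite (const_of_derive_0 h a b); [exact ha| |exact Hs].
  intros y Hy. apply (derivable_pt_lim_eq _ _ _ _ (Hh y Hy)).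
  rewrite (Hk0 y Hy). ring.
Qed.

(* [(y y')' = y'^2 + p y^2 >= 0] and [y y'] vanishes at both ends, so [y y' = 0]
   and [y^2] is constant. *)
Lemma vanish_of_derive2_nonneg_mul y y' p a b : a < b -> y a = 0 -> y b = 0 ->
  (forall s, a <= s <= b -> derivable_pt_lim y s (y' s)) ->
  (forall s, a <= s <= b -> derivable_pt_lim y' s (p s * y s)) ->
  (forall s, a <= s <= b -> 0 <= p s) ->
  forall s, a <= s <= b -> y s = 0.
Proof.
  intros Hab ya yb Hy Hy' Hp.
  assert (Hyy' : forall s, a <= s <= b -> y s * y' s = 0).
  { assert (D : forall s, a <= s <= b -> derivable_pt_lim (fun t => y t * y' t) s
                                         (y' s * y' s + y s * (p s * y s))).
    { intros s Hs. exact (derivable_pt_lim_mult' _ _ _ _ _ (Hy s Hs) (Hy' s Hs)). }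
    assert (P : forall s, a <= s <= b -> 0 <= y' s * y' s + y s * (p s * y s)).
    { intros s Hs. specialize (Hp s Hs). nra. }
    intros s Hs.
    pose proof (incr_of_derive_ge0 _ _ a b D P a s ltac:(lra) ltac:(lra) ltac:(lra)).
    pose proof (incr_of_derive_ge0 _ _ a b D P s b ltac:(lra) ltac:(lra) ltac:(lra)).
    cbv beta in *. rewrite ya in *. rewrite yb in *. lra. }
  assert (Dsq : forall s, a <= s <= b -> derivable_pt_lim (fun t => y t * y t) s 0).
  { intros s Hs. pose proof (Hy s Hs).
    eapply derivable_pt_lim_eq; [derive_rules|]. pose proof (Hyy' s Hs). lra. }
  intros s Hs. pose proof (const_of_derive_0 _ a b Dsq s Hs). cbv beta in *.
  rewrite ya in *. nra.
Qed.

Lemma derive_0_at_max F F' x0 :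
  (forall x, F x <= F x0) -> derivable_pt_lim F x0 F' -> F' = 0.
Proof.
  intros Hmax HF.
  exact (deriv_maximum F (x0 - 1) (x0 + 1) x0 (exist _ F' HF) ltac:(lra) ltac:(lra)
           (fun x _ _ => Hmax x)).
Qed.

Lemma derive2_le0_at_max F F' F'' x0 :
  (forall x, F x <= F x0) -> (forall x, derivable_pt_lim F x (F' x)) ->
  F' x0 = 0 -> derivable_pt_lim F' x0 F'' -> F'' <= 0.
Proof.
  intros Hmax HF HF'0 HF'. destruct (Rle_lt_dec F'' 0) as [|HF''pos]; [assumption|]. exfalso.
  destruct (HF' (F'' / 2) ltac:(lra)) as [delta Hdelta].
  pose proof (cond_pos delta) as Hdelta_pos.
  destruct (MVT_cor2 F F' x0 (x0 + delta / 2)) as (xi & E & Hxi); [lra|intros; apply HF|].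
  specialize (Hdelta (xi - x0) ltac:(lra)).
  rewrite Rabs_right in Hdelta by lra.
  replace (x0 + (xi - x0)) with xi in Hdelta by ring. rewrite HF'0 in Hdelta.
  assert (Hq : Rabs ((F' xi - 0) / (xi - x0) - F'') < F'' / 2) by (apply Hdelta; lra).
  apply Rabs_def2 in Hq. destruct Hq as [_ Hq].
  assert (HF'xi : 0 < F' xi).
  { replace (F' xi) with ((F' xi - 0) / (xi - x0) * (xi - x0)) by (field; lra).
    apply Rmult_lt_0_compat; lra. }
  specialize (Hmax (x0 + delta / 2)). nra.
Qed.

Lemma lipschitz_at_zero_of_derivable g g' g'' x0 r :
  (forall x, derivable_pt_lim g x (g' x)) -> (forall x, derivable_pt_lim g' x (g'' x)) ->
  g x0 = 0 -> exists L, forall x, Rabs (x - x0) <= r -> Rabs (g x) <= L * Rabs (x - x0).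
Proof.
  intros Hg Hg' Hg0.
  destruct (bounded_of_derivable g' (x0 - r) (x0 + r)) as [L HL]; [eauto|].
  exists L. intros x Hx.
  assert (x0 - r <= x <= x0 + r) by (unfold Rabs in Hx; destruct Rcase_abs in Hx; lra).
  destruct (MVT_abs g g' x0 x) as (xi & E & Hxi); [intros; apply Hg|].
  rewrite Hg0, Rminus_0_r in E. rewrite E.
  apply Rmult_le_compat_r; [apply Rabs_pos|]. apply HL.
  unfold Rmin, Rmax in Hxi. destruct Rle_dec in Hxi; lra.
Qed.

(* Gronwall: [G = u^2 + u'^2] satisfies [G' <= (2 + K^2) G], so
   [exp(-(2 + K^2) s) G] is nonincreasing from [G 0 = 0]. *)
Lemma vanish_of_second_order_bound u u' u'' K T :
  (forall s, 0 <= s <= T -> derivable_pt_lim u s (u' s)) ->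
  (forall s, 0 <= s <= T -> derivable_pt_lim u' s (u'' s)) ->
  (forall s, 0 <= s <= T -> Rabs (u'' s) <= K * Rabs (u s)) ->
  u 0 = 0 -> u' 0 = 0 -> forall s, 0 <= s <= T -> u s = 0 /\ u' s = 0.
Proof.
  intros Hu Hu' Hu'' Hu0 Hu'0.
  set (C := 2 + K * K).
  set (G := fun s => u s * u s + u' s * u' s).
  set (H := fun s => - (exp (- C * s) * (u s * u s + u' s * u' s))).
  assert (HD : forall s, 0 <= s <= T -> derivable_pt_lim H s
     (- (exp (- C * s) * (2 * u s * u' s + 2 * u' s * u'' s - C * G s)))).
  { intros s Hs. pose proof (Hu s Hs). pose proof (Hu' s Hs).
    unfold H, G. eapply derivable_pt_lim_eq; [derive_rules|]. cbv beta. ring. }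
  assert (HP : forall s, 0 <= s <= T ->
     0 <= - (exp (- C * s) * (2 * u s * u' s + 2 * u' s * u'' s - C * G s))).
  { intros s Hs. pose proof (exp_pos (- C * s)).
    assert (Hsq : u'' s * u'' s <= K * K * (u s * u s)).
    { specialize (Hu'' s Hs). pose proof (Rabs_pos (u'' s)).
      pose proof (pow2_abs (u'' s)). pose proof (pow2_abs (u s)). nra. }
    assert (2 * u s * u' s + 2 * u' s * u'' s <= C * G s); [|nra].
    unfold C, G. pose proof (pow2_ge_0 (u s - u' s)). pose proof (pow2_ge_0 (u' s - u'' s)).
    nra. }
  intros s Hs.
  pose proof (incr_of_derive_ge0 H _ 0 T HD HP 0 s ltac:(lra) ltac:(lra) ltac:(lra)) as Hm.
  unfold H, G in Hm. rewrite Hu0, Hu'0 in Hm. pose proof (exp_pos (- C * s)).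
  assert (u s * u s + u' s * u' s <= 0) by nra. nra.
Qed.

Definition velocity_pairing (fd c v X : nat -> R -> R) (s : R) : R :=
  - (fd 0%nat (c 1%nat s) * fd 0%nat (c 1%nat s) * v 0%nat s * X 0%nat s) + v 1%nat s * X 1%nat s.

(* [g(W, d/dt) - g(J, D(d/dt)/ds)] for [W = DJ/ds]. *)
Definition killing_wronskian (fd c v J W : nat -> R -> R) (s : R) : R :=
  - (fd 0%nat (c 1%nat s) * fd 0%nat (c 1%nat s) * W 0%nat s)
  + fd 0%nat (c 1%nat s) * fd 1%nat (c 1%nat s) * (v 1%nat s * J 0%nat s - v 0%nat s * J 1%nat s).

Section Geodesic.
Variables (fd : nat -> R -> R) (T : R) (c v acc : nat -> R -> R).
Hypothesis Hsmooth : forall n x, derivable_pt_lim (fd n) x (fd (S n) x).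
Hypothesis Hpos : forall x, 0 < fd 0%nat x.
Hypothesis Hgeo : geodesic fd T c v acc.

Lemma geodesic_equations s : 0 <= s <= T ->
  derivable_pt_lim (c 0%nat) s (v 0%nat s) /\ derivable_pt_lim (c 1%nat) s (v 1%nat s) /\
  derivable_pt_lim (v 0%nat) s (acc 0%nat s) /\ derivable_pt_lim (v 1%nat) s (acc 1%nat s) /\
  acc 0%nat s = - (2 * (fd 1%nat (c 1%nat s) / fd 0%nat (c 1%nat s)) * v 0%nat s * v 1%nat s) /\
  acc 1%nat s = - (fd 0%nat (c 1%nat s) * fd 1%nat (c 1%nat s) * v 0%nat s * v 0%nat s).
Proof.
  intros Hs.
  destruct (Hgeo s Hs 0%nat ltac:(lia)) as (Hc0 & Hv0 & E0).
  destruct (Hgeo s Hs 1%nat ltac:(lia)) as (Hc1 & Hv1 & E1).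
  unfold sum2, Chr in E0, E1. simpl in E0, E1.
  repeat split; auto; lra.
Qed.

Lemma geodesic_energy_const : forall s, 0 <= s <= T ->
  fd 0%nat (c 1%nat s) * fd 0%nat (c 1%nat s) * v 0%nat s
  = fd 0%nat (c 1%nat 0) * fd 0%nat (c 1%nat 0) * v 0%nat 0.
Proof.
  apply (const_of_derive_0 (fun y => fd 0%nat (c 1%nat y) * fd 0%nat (c 1%nat y) * v 0%nat y)).
  intros s Hs. destruct (geodesic_equations s Hs) as (Hc0 & Hc1 & Hv0 & Hv1 & E0 & E1).
  eapply derivable_pt_lim_eq; [derive_rules|]. cbv beta. rewrite E0. field.
  specialize (Hpos (c 1%nat s)). lra.
Qed.

Lemma geodesic_norm_const : forall s, 0 <= s <= T ->
  v 1%nat s * v 1%nat s - fd 0%nat (c 1%nat s) * fd 0%nat (c 1%nat s) * v 0%nat s * v 0%nat s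
  = v 1%nat 0 * v 1%nat 0 - fd 0%nat (c 1%nat 0) * fd 0%nat (c 1%nat 0) * v 0%nat 0 * v 0%nat 0.
Proof.
  apply (const_of_derive_0 (fun y => v 1%nat y * v 1%nat y
            - fd 0%nat (c 1%nat y) * fd 0%nat (c 1%nat y) * v 0%nat y * v 0%nat y)).
  intros s Hs. destruct (geodesic_equations s Hs) as (Hc0 & Hc1 & Hv0 & Hv1 & E0 & E1).
  eapply derivable_pt_lim_eq; [derive_rules|]. cbv beta. rewrite E0, E1. field.
  specialize (Hpos (c 1%nat s)). lra.
Qed.

(* With [E = f^2 t'] and [N = x'^2 - f^2 t'^2] conserved, a zero of [x'] at [s]
   gives [x'(0)^2 = E^2 (1/f(x(0))^2 - 1/f(x(s))^2) <= 0]. *)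
Lemma geodesic_vx_neq0 :
  (forall x, fd 0%nat x <= fd 0%nat (c 1%nat 0)) -> v 1%nat 0 <> 0 ->
  forall s, 0 <= s <= T -> v 1%nat s <> 0.
Proof.
  intros Hmax Hv0 s Hs Hvs.
  pose proof (geodesic_energy_const s Hs) as HE.
  pose proof (geodesic_norm_const s Hs) as HN. rewrite Hvs in HN.
  pose proof (Hmax (c 1%nat s)). pose proof (Hpos (c 1%nat s)). pose proof (Hpos (c 1%nat 0)).
  set (Fs := fd 0%nat (c 1%nat s)) in *. set (F0 := fd 0%nat (c 1%nat 0)) in *.
  set (p := v 0%nat s) in *. set (q := v 0%nat 0) in *. set (w := v 1%nat 0) in *.
  assert (Hw : w * w * (Fs * Fs) = F0 * F0 * q * q * (Fs * Fs - F0 * F0)).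
  { transitivity (F0 * F0 * q * q * (Fs * Fs) - (Fs * Fs * p) * (Fs * Fs * p)).
    - replace (w * w) with (F0 * F0 * q * q - Fs * Fs * p * p) by lra. ring.
    - rewrite HE. ring. }
  assert (0 <= F0 * F0 * q * q) by (pose proof (Rle_0_sqr (F0 * q)); unfold Rsqr in *; nra).
  assert (Fs * Fs - F0 * F0 <= 0) by nra.
  assert (0 < w * w) by (pose proof (Rsqr_pos_lt w Hv0); unfold Rsqr in *; lra).
  assert (0 < w * w * (Fs * Fs)) by (apply Rmult_lt_0_compat; nra).
  nra.
Qed.

Lemma geodesic_stays_at_critical :
  fd 1%nat (c 1%nat 0) = 0 -> v 1%nat 0 = 0 ->
  forall s, 0 <= s <= T -> c 1%nat s = c 1%nat 0 /\ v 1%nat s = 0.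
Proof.
  intros Hcrit Hv0.
  set (x0 := c 1%nat 0).
  destruct (bounded_of_derivable (c 1%nat) 0 T) as [X HX].
  { intros s Hs. destruct (geodesic_equations s Hs) as (_ & Hc1 & _). eauto. }
  destruct (bounded_of_derivable (fun s => fd 0%nat (c 1%nat s)) 0 T) as [F HF].
  { intros s Hs. destruct (geodesic_equations s Hs) as (_ & Hc1 & _).
    eexists. derive_rules. }
  destruct (bounded_of_derivable (v 0%nat) 0 T) as [V HV].
  { intros s Hs. destruct (geodesic_equations s Hs) as (_ & _ & Hv0' & _). eauto. }
  destruct (lipschitz_at_zero_of_derivable (fd 1%nat) (fd 2%nat) (fd 3%nat) x0 (X + Rabs x0))
    as [L HL]; [auto|auto|exact Hcrit|].
  assert (Hacc : forall s, 0 <= s <= T ->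
            Rabs (acc 1%nat s) <= F * L * (V * V) * Rabs (c 1%nat s - x0)).
  { intros s Hs. destruct (geodesic_equations s Hs) as (_ & _ & _ & _ & _ & E1).
    assert (Hx : Rabs (c 1%nat s - x0) <= X + Rabs x0).
    { specialize (HX s Hs). pose proof (Rabs_triang (c 1%nat s) (- x0)).
      rewrite Rabs_Ropp in *. unfold Rminus. lra. }
    specialize (HL _ Hx). specialize (HF s Hs). specialize (HV s Hs).
    rewrite E1, Rabs_Ropp, !Rabs_mult.
    pose proof (Rabs_pos (fd 0%nat (c 1%nat s))). pose proof (Rabs_pos (fd 1%nat (c 1%nat s))).
    pose proof (Rabs_pos (v 0%nat s)).
    replace (F * L * (V * V) * Rabs (c 1%nat s - x0))
      with (F * (L * Rabs (c 1%nat s - x0)) * V * V) by ring.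
    repeat apply Rmult_le_compat; auto using Rmult_le_pos. }
  intros s Hs.
  destruct (vanish_of_second_order_bound (fun s => c 1%nat s - x0) (v 1%nat) (acc 1%nat)
              (F * L * (V * V)) T) with (s := s) as [Hx Hv]; auto.
  - intros y Hy. destruct (geodesic_equations y Hy) as (_ & Hc1 & _).
    eapply derivable_pt_lim_eq; [derive_rules|]. ring.
  - intros y Hy. now destruct (geodesic_equations y Hy) as (_ & _ & _ & Hv1 & _).
  - cbv beta. unfold x0. ring.
  - split; [cbv beta in Hx; lra|exact Hv].
Qed.

Section Jacobi.
Variables (a b : R) (J J1 W W1 : nat -> R -> R).
Hypothesis HJ : jacobi fd a b c v J J1 W W1.

Lemma jacobi_equations s : a <= s <= b ->
  derivable_pt_lim (J 0%nat) s (J1 0%nat s) /\ derivable_pt_lim (J 1%nat) s (J1 1%nat s) /\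
  derivable_pt_lim (W 0%nat) s (W1 0%nat s) /\ derivable_pt_lim (W 1%nat) s (W1 1%nat s) /\
  W 0%nat s = J1 0%nat s + fd 1%nat (c 1%nat s) / fd 0%nat (c 1%nat s)
                           * (v 0%nat s * J 1%nat s + v 1%nat s * J 0%nat s) /\
  W 1%nat s = J1 1%nat s + fd 0%nat (c 1%nat s) * fd 1%nat (c 1%nat s) * v 0%nat s * J 0%nat s /\
  W1 0%nat s = - (sum2 (fun i => sum2 (fun j => Chr fd 0 i j (c 1%nat s) * v i s * W j s)))
    - sum2 (fun l => sum2 (fun i => sum2 (fun j =>
         Riem fd 0 l i j (c 1%nat s) * J i s * v j s * v l s))) /\
  W1 1%nat s = - (sum2 (fun i => sum2 (fun j => Chr fd 1 i j (c 1%nat s) * v i s * W j s)))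
    - sum2 (fun l => sum2 (fun i => sum2 (fun j =>
         Riem fd 1 l i j (c 1%nat s) * J i s * v j s * v l s))).
Proof.
  intros Hs.
  destruct (HJ s Hs 0%nat ltac:(lia)) as (HJ0 & EW0 & HW0 & EW'0).
  destruct (HJ s Hs 1%nat ltac:(lia)) as (HJ1 & EW1 & HW1 & EW'1).
  repeat split; auto; try lra.
  - rewrite EW0. unfold sum2, Chr. simpl. ring.
  - rewrite EW1. unfold sum2, Chr. simpl. ring.
Qed.

Lemma jacobi_vanish_on_critical_line x0 : a < b ->
  fd 1%nat x0 = 0 -> fd 2%nat x0 <= 0 ->
  (forall s, a <= s <= b -> c 1%nat s = x0 /\ v 1%nat s = 0) ->
  J 0%nat a = 0 -> J 1%nat a = 0 -> J 0%nat b = 0 -> J 1%nat b = 0 ->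
  forall s, a <= s <= b -> J 0%nat s = 0 /\ J 1%nat s = 0.
Proof.
  intros Hab Hf1 Hf2 Hline Ja0 Ja1 Jb0 Jb1.
  pose proof (Hpos x0) as Hf0.
  assert (HJ0 : forall s, a <= s <= b -> J 0%nat s = 0).
  { apply (vanish_of_derive_const_mul (J 0%nat) (W 0%nat) (fun _ => 1) a b); auto.
    - intros s Hs. destruct (jacobi_equations s Hs) as (HJ0 & _ & _ & _ & EW0 & _).
      destruct (Hline s Hs) as [Ex Ev]. rewrite EW0, Ex, Hf1.
      eapply derivable_pt_lim_eq; [exact HJ0|]. field. lra.
    - intros s Hs. destruct (jacobi_equations s Hs) as (_ & _ & HW0 & _ & _ & _ & EW'0 & _).
      destruct (Hline s Hs) as [Ex Ev].
      eapply derivable_pt_lim_eq; [exact HW0|].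
      rewrite EW'0. cbv beta iota delta [sum2 Chr Riem dChr]. rewrite Ex, Ev, Hf1.
      field. lra. }
  assert (HJ1 : forall s, a <= s <= b -> J 1%nat s = 0).
  { apply (vanish_of_derive2_nonneg_mul (J 1%nat) (W 1%nat)
             (fun s => - (fd 0%nat x0 * fd 2%nat x0 * v 0%nat s * v 0%nat s)) a b); auto.
    - intros s Hs. destruct (jacobi_equations s Hs) as (_ & HJ1 & _ & _ & _ & EW1 & _).
      destruct (Hline s Hs) as [Ex Ev]. rewrite EW1, Ex, Hf1.
      eapply derivable_pt_lim_eq; [exact HJ1|]. ring.
    - intros s Hs. destruct (jacobi_equations s Hs) as (_ & _ & _ & HW1 & _ & _ & _ & EW'1).
      destruct (Hline s Hs) as [Ex Ev].
      eapply derivable_pt_lim_eq; [exact HW1|].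
      rewrite EW'1. cbv beta iota delta [sum2 Chr Riem dChr]. rewrite Ex, Ev, Hf1, (HJ0 s Hs).
      field. lra.
    - intros s Hs.
      replace (- (fd 0%nat x0 * fd 2%nat x0 * v 0%nat s * v 0%nat s))
        with (fd 0%nat x0 * - fd 2%nat x0 * (v 0%nat s * v 0%nat s)) by ring.
      apply Rmult_le_pos; [nra|apply Rle_0_sqr]. }
  intros s Hs. auto.
Qed.

Hypothesis Ha : 0 <= a.
Hypothesis Hb : b <= T.

Lemma velocity_pairing_derive s : a <= s <= b ->
  derivable_pt_lim (velocity_pairing fd c v J) s (velocity_pairing fd c v W s).
Proof.
  intros Hs. destruct (geodesic_equations s ltac:(lra)) as (Hc0 & Hc1 & Hv0 & Hv1 & E0 & E1).
  destruct (jacobi_equations s Hs) as (HJ0 & HJ1 & _ & _ & EW0 & EW1 & _).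
  unfold velocity_pairing. eapply derivable_pt_lim_eq; [derive_rules|].
  rewrite E0, E1, EW0, EW1. field. specialize (Hpos (c 1%nat s)). lra.
Qed.

Lemma velocity_pairing_derive2 s : a <= s <= b ->
  derivable_pt_lim (velocity_pairing fd c v W) s 0.
Proof.
  intros Hs. destruct (geodesic_equations s ltac:(lra)) as (Hc0 & Hc1 & Hv0 & Hv1 & E0 & E1).
  destruct (jacobi_equations s Hs) as (_ & _ & HW0 & HW1 & EW0 & EW1 & EW'0 & EW'1).
  unfold velocity_pairing. eapply derivable_pt_lim_eq; [derive_rules|].
  rewrite E0, E1, EW'0, EW'1. cbv beta iota delta [sum2 Chr Riem dChr].
  rewrite EW0, EW1. field. specialize (Hpos (c 1%nat s)). lra.
Qed.

Lemma killing_wronskian_derive s : a <= s <= b ->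
  derivable_pt_lim (killing_wronskian fd c v J W) s 0.
Proof.
  intros Hs. destruct (geodesic_equations s ltac:(lra)) as (Hc0 & Hc1 & Hv0 & Hv1 & E0 & E1).
  destruct (jacobi_equations s Hs) as (HJ0 & HJ1 & HW0 & _ & EW0 & EW1 & EW'0 & _).
  unfold killing_wronskian. eapply derivable_pt_lim_eq; [derive_rules|].
  rewrite E0, E1, EW'0. cbv beta iota delta [sum2 Chr Riem dChr].
  rewrite EW0, EW1. field. specialize (Hpos (c 1%nat s)). lra.
Qed.

Lemma jacobi_ratio_derive s : a <= s <= b -> v 1%nat s <> 0 ->
  velocity_pairing fd c v J s = 0 ->
  derivable_pt_lim (fun y => J 0%nat y / (v 1%nat y * v 1%nat y)) s
    (killing_wronskian fd c v J W s
     * - / (fd 0%nat (c 1%nat s) * fd 0%nat (c 1%nat s) * v 1%nat s * v 1%nat s)).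
Proof.
  intros Hs Hv Hh. destruct (geodesic_equations s ltac:(lra)) as (Hc0 & Hc1 & Hv0 & Hv1 & E0 & E1).
  destruct (jacobi_equations s Hs) as (HJ0 & HJ1 & _ & _ & EW0 & _).
  unfold velocity_pairing in Hh.
  assert (EJ1 : J 1%nat s = fd 0%nat (c 1%nat s) * fd 0%nat (c 1%nat s) * v 0%nat s * J 0%nat s
                            / v 1%nat s) by (field_simplify_eq; [lra|exact Hv]).
  specialize (Hpos (c 1%nat s)).
  eapply derivable_pt_lim_eq; [derive_rules|].
  - apply Rmult_integral_contrapositive; split; exact Hv.
  - unfold killing_wronskian. rewrite E1, EW0, EJ1. unfold Rsqr. field. split; [exact Hv|lra].
Qed.

Lemma jacobi_vanish_of_vx_neq0 : a < b ->
  (forall s, a <= s <= b -> v 1%nat s <> 0) ->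
  J 0%nat a = 0 -> J 1%nat a = 0 -> J 0%nat b = 0 -> J 1%nat b = 0 ->
  forall s, a <= s <= b -> J 0%nat s = 0 /\ J 1%nat s = 0.
Proof.
  intros Hab Hv Ja0 Ja1 Jb0 Jb1.
  assert (Hh : forall s, a <= s <= b -> velocity_pairing fd c v J s = 0).
  { apply (vanish_of_derive_const_mul _ (velocity_pairing fd c v W) (fun _ => 1) a b); auto.
    - unfold velocity_pairing. rewrite Ja0, Ja1. ring.
    - unfold velocity_pairing. rewrite Jb0, Jb1. ring.
    - intros s Hs. rewrite Rmult_1_r. now apply velocity_pairing_derive.
    - exact velocity_pairing_derive2. }
  assert (Hratio : forall s, a <= s <= b -> J 0%nat s / (v 1%nat s * v 1%nat s) = 0).
  { apply (vanish_of_derive_const_mul _ (killing_wronskian fd c v J W)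
      (fun s => - / (fd 0%nat (c 1%nat s) * fd 0%nat (c 1%nat s) * v 1%nat s * v 1%nat s)) a b).
    - exact Hab.
    - rewrite Ja0. unfold Rdiv. ring.
    - rewrite Jb0. unfold Rdiv. ring.
    - intros s Hs. apply jacobi_ratio_derive; auto.
    - exact killing_wronskian_derive.
    - intros s Hs. apply Ropp_neq_0_compat, Rinv_neq_0_compat.
      pose proof (Hv s Hs). pose proof (Hpos (c 1%nat s)).
      repeat apply Rmult_integral_contrapositive_currified; auto; lra. }
  intros s Hs. specialize (Hv s Hs). specialize (Hh s Hs). specialize (Hratio s Hs).
  assert (EJ0 : J 0%nat s = 0).
  { replace (J 0%nat s) with (J 0%nat s / (v 1%nat s * v 1%nat s) * (v 1%nat s * v 1%nat s))
      by (field; exact Hv).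
    rewrite Hratio. ring. }
  split; [exact EJ0|].
  unfold velocity_pairing in Hh. rewrite EJ0 in Hh.
  apply (Rmult_eq_reg_l (v 1%nat s)); [lra|exact Hv].
Qed.

End Jacobi.
End Geodesic.

Theorem lemma3p1 (f : R -> R) (fd : nat -> R -> R)
  (Hf : fd 0%nat = f) (Hsmooth : smooth_family fd)
  (Hbounds : exists m M : R, 0 < m /\ forall x, m <= f x <= M)
  (t0 x0 : R)
  (Hsup : is_lub (fun y => exists x, y = f x) (f x0)) :
  timelike_pole fd t0 x0.
Proof.
  subst f. destruct Hbounds as (m & M & Hm & Hbounds).
  assert (Hpos : forall x, 0 < fd 0%nat x) by (intro x; specialize (Hbounds x); lra).
  assert (Hmax : forall x, fd 0%nat x <= fd 0%nat x0) by (intro x; apply (proj1 Hsup); eauto).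
  pose proof (derive_0_at_max _ _ x0 Hmax (Hsmooth 0%nat x0)) as Hf1.
  pose proof (derive2_le0_at_max _ _ _ x0 Hmax (Hsmooth 0%nat) Hf1 (Hsmooth 1%nat x0)) as Hf2.
  intros T c v acc Hgeo _ _ Hx0
    (a & b & Ha & Hb & Hab & J & J1 & W & W1 & HJ & Ja0 & Ja1 & Jb0 & Jb1 & s & Hs & HJs).
  subst x0.
  enough (J 0%nat s = 0 /\ J 1%nat s = 0) by tauto.
  destruct (Req_dec (v 1%nat 0) 0) as [Hv0|Hv0].
  - apply (jacobi_vanish_on_critical_line fd c v Hpos a b J J1 W W1 HJ (c 1%nat 0)); auto.
    intros y Hy. apply (geodesic_stays_at_critical fd T c v acc); auto; lra.
  - apply (jacobi_vanish_of_vx_neq0 fd T c v acc Hsmooth Hpos Hgeo a b J J1 W W1); auto.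
    intros y Hy. apply (geodesic_vx_neq0 fd T c v acc); auto; lra.
Qed.
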